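(* Let $V$ be a vertex algebra over a field $k$ of characteristic $0$ with translation operator $T$, and let $f\in k((x))$. Then for all $a,b\in V$, $$a_{(f(x))}b+b_{(f(-x))}a=\sum_{j\in\mathbb{Z}_+}\frac{(-1)^j}{(j+1)!}\,T^{j+1}\bigl(a_{(x^{j+1}f(x))}b\bigr).$$
   Context: For a vertex algebra $V$ with $n$-th products $a(n)b$ (so that $a(n)b=0$ for $n\gg0$), write $a(z)b=\sum_{n\in\mathbb{Z}}a(n)b\,z^{-n-1}\in V((z))$. For a Laurent series $f\in k((x))$ the $f$-product is $a_{(f)}b=\operatorname{res}_z f(z)a(z)b$, the coefficient of $z^{-1}$ in $f(z)a(z)b$; notation such as $a_{(x^{j}f(x))}b$ means the $f$-product with the series $x^jf(x)$. The translation operator is $Ta=a(-2)\mathbf{1}$. The sum on the right is finite. *)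

From HB Require Import structures.
From mathcomp Require Import all_boot all_order all_algebra.
Set Implicit Arguments. Unset Strict Implicit. Unset Printing Implicit Defensive.
Import Order.TTheory GRing.Theory Num.Theory.
Local Open Scope ring_scope.

Definition binz (k : fieldType) (m : int) (j : nat) : k :=
  (\prod_(i < j) (m - i%:Z)%:~R) / (j`!)%:R.

(* Borcherds' sums are finite by truncation;
   we state them as equality of all sufficiently long partial sums. *)
Record vertex_algebra (k : fieldType) (V : lmodType k) := VertexAlgebra {
  nprod : int -> V -> V -> V;
  vac : V;
  vtrunc : V -> V -> int;
  nprod_linl : forall (n : int) (c : k) (a a' b : V),
      nprod n (c *: a + a') b = c *: nprod n a b + nprod n a' b;
  nprod_linr : forall (n : int) (c : k) (a b b' : V),
      nprod n a (c *: b + b') = c *: nprod n a b + nprod n a b';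
  vtruncP : forall (a b : V) (n : int), vtrunc a b <= n -> nprod n a b = 0;
  vac_left : forall (n : int) (a : V),
      nprod n vac a = if n == (-1)%Z then a else 0;
  vac_right_m1 : forall a : V, nprod (-1)%Z a vac = a;
  vac_right_ge0 : forall (n : int) (a : V), 0 <= n -> nprod n a vac = 0;
  borcherds : forall (l m n : int) (a b c : V), exists N : nat,
      forall M : nat, (N <= M)%N ->
      \sum_(j < M) binz k m j *: nprod (m + n - j%:Z) (nprod (l + j%:Z) a b) c
      = \sum_(j < M) (((-1) ^+ j * binz k l j) *:
            (nprod (m + l - j%:Z) a (nprod (n + j%:Z) b c)
             - ((-1) ^ l) *: nprod (n + l - j%:Z) b (nprod (m + j%:Z) a c)))
}.

Definition transl (k : fieldType) (V : lmodType k) (VA : vertex_algebra V)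
  (a : V) : V := nprod VA (-2)%Z a (vac VA).

Record laurent (k : fieldType) := Laurent {
  llow : int;
  lcoef : int -> k;
  lcoefP : forall n : int, n < llow -> lcoef n = 0
}.

Lemma lneg_subproof (k : fieldType) (f : laurent k) (n : int) :
  n < llow f -> (-1) ^ n * lcoef f n = 0.
Proof. by move=> Hn; rewrite (lcoefP Hn) mulr0. Qed.
Definition laurent_neg (k : fieldType) (f : laurent k) : laurent k :=
  @Laurent k (llow f) (fun n => (-1) ^ n * lcoef f n) (@lneg_subproof k f).

Lemma lshift_subproof (k : fieldType) (j : nat) (f : laurent k) (n : int) :
  n < llow f + j%:Z -> lcoef f (n - j%:Z) = 0.
Proof. by move=> Hn; apply: lcoefP; rewrite ltrBlDr. Qed.
Definition laurent_xshift (k : fieldType) (j : nat) (f : laurent k) : laurent k :=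
  @Laurent k (llow f + j%:Z) (fun n => lcoef f (n - j%:Z)) (@lshift_subproof k j f).

(* f-product  a_(f) b = res_z f(z) a(z) b = sum_n f_n a(n)b  (finite sum:
   f_n = 0 for n < llow f, a(n)b = 0 for n >= vtrunc a b). *)
Definition f_product (k : fieldType) (V : lmodType k) (VA : vertex_algebra V)
  (f : laurent k) (a b : V) : V :=
  \sum_(i < `|vtrunc VA a b - llow f|%N)
     lcoef f (llow f + i%:Z) *: nprod VA (llow f + i%:Z) a b.

(* Both sides are linear in the Laurent series f, so it suffices to treat a
   single coefficient, i.e. to prove skew-symmetry
     a(n)b + (-1)^n b(n)a = sum_j (-1)^j / (j+1)! T^(j+1) (a(n+1+j)b).
   This is the Borcherds identity for (l, m, n) = (n+1, -1, -1) applied to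
   a, b and the vacuum, once the creation formula x(-p-1)1 = T^p x / p! is
   known; the latter follows by induction on p from the Borcherds identity
   for (-2, m, -1) applied to x, 1, 1, which gives (T x)(m-1)1 = (1-m) x(m-2)1. *)
From HB Require Import structures.
From mathcomp Require Import all_boot all_order all_algebra.
From mathcomp Require Import zify ring.
Import Order.TTheory GRing.Theory Num.Theory.
Local Open Scope ring_scope.
Set Implicit Arguments. Unset Strict Implicit.

Lemma big_ord_trunc (W : nmodType) K0 K (leK0K : (K0 <= K)%N) (F : 'I_K -> W) :
  (forall i : 'I_K, (K0 <= i)%N -> F i = 0) ->
  \sum_(i < K) F i = \sum_(i < K0) F (widen_ord leK0K i).
Proof.
move=> F0; rewrite (bigID (fun i : 'I_K => (i < K0)%N)) /=.
by rewrite [X in _ + X]big1 ?addr0 ?big_ord_narrow // => i; rewrite -leqNgt; apply: F0.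
Qed.

Lemma eventually_all_lt (P : nat -> nat -> Prop) K :
  (forall i, exists N, forall M, (N <= M)%N -> P i M) ->
  exists N, forall i M, (i < K)%N -> (N <= M)%N -> P i M.
Proof.
move=> evP; elim: K => [|K [N IH]]; first by exists 0%N.
have [N' HN'] := evP K.
exists (maxn N N') => i M; rewrite ltnS leq_eqVlt => /orP [/eqP -> | ltiK] leNM.
  by apply: HN'; rewrite (leq_trans _ leNM) // leq_maxr.
by apply: IH => //; rewrite (leq_trans _ leNM) // leq_maxl.
Qed.

Section LinearIteration.
Variables (R : pzRingType) (U : lmodType R) (g : U -> U).
Hypothesis g_linear : linear g.

Lemma iter_is_linear p : linear (iter p g).
Proof. by elim: p => [|p IH] c x y //=; rewrite IH g_linear. Qed.

Let iterL p : {linear U -> U} :=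
  HB.pack (iter p g) (GRing.isLinear.Build R U U *:%R (iter p g) (iter_is_linear p)).

Lemma iterZ p c x : iter p g (c *: x) = c *: iter p g x.
Proof. exact: (linearZ_LR (iterL p)). Qed.

Lemma iter_sum p (I : Type) (r : seq I) (P : pred I) (F : I -> U) :
  iter p g (\sum_(i <- r | P i) F i) = \sum_(i <- r | P i) iter p g (F i).
Proof. exact: (linear_sum (iterL p)). Qed.
End LinearIteration.

Section VertexAlgebra.
Variables (k : fieldType) (V : lmodType k) (VA : vertex_algebra V).

Local Notation T := (transl VA).
Local Notation vac1 := (vac VA).

Lemma nprod0l n b : nprod VA n 0 b = 0.
Proof. by have := nprod_linl VA n (-1) 0 0 b; rewrite scaler0 addr0 scaleN1r addNr. Qed.

Lemma nprod0r n a : nprod VA n a 0 = 0.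
Proof. by have := nprod_linr VA n (-1) a 0 0; rewrite scaler0 addr0 scaleN1r addNr. Qed.

Lemma transl_is_linear : linear T.
Proof. by move=> c x y; apply: nprod_linl. Qed.

Lemma nprod_transl_vac (m : int) x :
  nprod VA (m - 1) (T x) vac1 = (1 - m)%:~R *: nprod VA (m - 2) x vac1.
Proof.
have [N HN] := borcherds VA (-2) m (-1) x vac1 vac1.
have le2N : (2 <= maxn N 2)%N by apply: leq_maxr.
have := HN _ (leq_maxl N 2).
rewrite (big_ord_trunc le2N); last first.
  by move=> i le2i; rewrite (@vac_right_ge0 _ _ VA (-2 + i%:Z)) ?nprod0l ?scaler0 //; lia.
rewrite (big_ord_trunc (leq_trans (isT : (1 <= 2)%N) le2N)); last first.
  move=> i le1i; rewrite !vac_left ifN; last by lia.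
  by rewrite ifN ?nprod0r ?scaler0 ?subr0 ?scaler0 //; lia.
rewrite !big_ord_recr !big_ord0 /= !add0r /binz !big_ord0 big_ord1 !divr1 /=.
rewrite -[Posz 0]/(0 : int) -[Posz 1]/(1 : int) !addr0 expr0 !mul1r !scale1r.
rewrite -/(transl VA x) (_ : -2 + 1 = -1 :> int) // !vac_right_m1.
rewrite vac_left (_ : (-1 - 2 == -1 :> int) = false) // scaler0 oppr0 addr0.
rewrite (_ : m - 1 - 1 = m - 2); last by ring.
by move=> eqBorch; rewrite intrB scalerBl scale1r -{1}eqBorch addrK.
Qed.

Hypothesis char0 : [pchar k] =i pred0.

Lemma natf_fact_neq0 n : (n`!%:R : k) != 0.
Proof. by rewrite ((pcharf0P _).1 char0) -lt0n fact_gt0. Qed.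

Lemma nprod_vac_neg p x : nprod VA (- (p%:Z) - 1) x vac1 = (p`!%:R)^-1 *: iter p T x.
Proof.
elim: p x => [|p IH] x.
  by rewrite -[Posz 0]/(0 : int) oppr0 sub0r vac_right_m1 fact0 invr1 scale1r.
have := nprod_transl_vac (- (p%:Z)) x; rewrite IH.
rewrite (_ : - (p%:Z) - 2 = - (p.+1%:Z) - 1); last by lia.
rewrite (_ : 1 - - p%:Z = p.+1%:Z); last by lia.
have pS_neq0 : (p.+1%:R : k) != 0 by rewrite ((pcharf0P _).1 char0).
move=> eqT; rewrite -[LHS](scalerK pS_neq0) -eqT scalerA.
by rewrite iterSr factS natrM invfM.
Qed.

Lemma binzN1 j : binz k (-1) j = (-1) ^+ j.
Proof.
rewrite /binz; suff -> : \prod_(i < j) ((-1 - i%:Z)%:~R : k) = (-1) ^+ j * j`!%:R.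
  by rewrite mulfK // natf_fact_neq0.
elim: j => [|j IH]; first by rewrite big_ord0 expr0 mul1r.
rewrite big_ord_recr /= IH factS natrM exprS.
rewrite (_ : -1 - j%:Z = - (j.+1%:Z)); last by lia.
rewrite mulrNz; ring.
Qed.

Lemma skew_symmetry (n : int) a b :
  exists N, forall M, (N <= M)%N ->
  nprod VA n a b + (-1) ^ n *: nprod VA n b a
  = \sum_(j < M) ((-1) ^+ j / (j.+1)`!%:R) *:
       iter j.+1 T (nprod VA (n + 1 + j%:Z) a b).
Proof.
have [N HN] := borcherds VA (n + 1) (-1) (-1) a b vac1.
exists (maxn N 1) => M leNM.
have le1M : (1 <= M)%N by rewrite (leq_trans _ leNM) // leq_maxr.
have := HN M (leq_trans (leq_maxl _ _) leNM).
rewrite [X in _ = X](big_ord_trunc le1M); last first.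
  move=> i le1i; rewrite !vac_right_ge0 ?nprod0r ?scaler0 ?subr0 ?scaler0 //; lia.
rewrite big_ord1 /= expr0 mul1r /binz big_ord0 div1r invr1 scale1r.
rewrite (_ : -1 + (n + 1) - 0%:Z = n); last by ring.
rewrite addr0 !vac_right_m1 expfzDr ?oppr_eq0 ?oner_eq0 // expr1z mulrN1.
rewrite scaleNr opprK => <-; apply: eq_bigr => j _.
rewrite -/(binz k (-1) j) binzN1 (_ : -1 + -1 - j%:Z = - (j.+1%:Z) - 1); last by lia.
by rewrite nprod_vac_neg scalerA mulrC.
Qed.

End VertexAlgebra.

Lemma f_product_bigE (k : fieldType) (V : lmodType k) (VA : vertex_algebra V)
    (f : laurent k) a b K :
  (forall i : nat, (K <= i)%N -> vtrunc VA a b <= llow f + i%:Z) ->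
  f_product VA f a b
  = \sum_(i < K) lcoef f (llow f + i%:Z) *: nprod VA (llow f + i%:Z) a b.
Proof.
move=> truncK; rewrite /f_product.
set K0 := `|_|%N.
pose F i := lcoef f (llow f + i%:Z) *: nprod VA (llow f + i%:Z) a b.
transitivity (\sum_(i < maxn K0 K) F i).
  rewrite (big_ord_trunc (leq_maxl K0 K)) // => i leK0i.
  by rewrite /F vtruncP ?scaler0 //; lia.
rewrite (big_ord_trunc (leq_maxr K0 K)) // => i leKi.
by rewrite /F vtruncP ?scaler0 // truncK.
Qed.

Unset Implicit Arguments.

Theorem lemma2p1 (k : fieldType) (hk : [pchar k] =i pred0)
  (V : lmodType k) (VA : vertex_algebra V) (f : laurent k) (a b : V) :
  exists N : nat, forall M : nat, (N <= M)%N ->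
    f_product VA f a b + f_product VA (laurent_neg f) b a
    = \sum_(j < M) (((-1) ^+ j / (j.+1)`!%:R) *:
                     iter j.+1 (transl VA) (f_product VA (laurent_xshift j.+1 f) a b)).
Proof.
set L := llow f.
set K := maxn `|vtrunc VA a b - L|%N `|vtrunc VA b a - L|%N.
have truncAB (i : nat) : (K <= i)%N -> vtrunc VA a b <= L + i%:Z by lia.
have truncBA (i : nat) : (K <= i)%N -> vtrunc VA b a <= L + i%:Z by lia.
have [N skewN] := eventually_all_lt K (fun i => skew_symmetry VA hk (L + i%:Z) a b).
exists N => M leNM.
rewrite (f_product_bigE truncAB) (f_product_bigE (f := laurent_neg f) truncBA).
rewrite -big_split.
transitivity (\sum_(i < K) \sum_(j < M)
    (lcoef f (L + i%:Z) * ((-1) ^+ j / (j.+1)`!%:R)) *: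
      iter j.+1 (transl VA) (nprod VA (L + i%:Z + 1 + j%:Z) a b)).
  apply: eq_bigr => i _ /=; rewrite -/L mulrC -scalerA -scalerDr.
  rewrite (skewN i M (ltn_ord i) leNM) scaler_sumr.
  by apply: eq_bigr => j _; rewrite scalerA.
rewrite exchange_big; apply: eq_bigr => j _.
rewrite (@f_product_bigE _ _ _ (laurent_xshift j.+1 f) a b K); last first.
  by move=> i leKi /=; have := truncAB i leKi; lia.
rewrite (iter_sum (transl_is_linear VA)) scaler_sumr; apply: eq_bigr => i _.
rewrite (iterZ (transl_is_linear VA)) /= scalerA [X in X *: _]mulrC -/L.
rewrite (_ : L + j.+1%:Z + i%:Z - j.+1%:Z = L + i%:Z); last by ring.
by rewrite (_ : L + j.+1%:Z + i%:Z = L + i%:Z + 1 + j%:Z); last by lia.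
Qed.
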